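(* Let $M=\mathbb{S}^1\times[-\rho,\rho]$ carry a metric of the form $ds^2=d\sigma^2+f(\theta,\sigma)^2d\theta^2$, with $\theta\in\mathbb{S}^1=[0,2\pi)$, $\sigma\in[-\rho,\rho]$ and $f>0$ smooth. Suppose there are constants $\alpha>0$ and $C\ge 0$ such that $R\ge-\alpha$ on $M$ and $|k_g|\le C$ on $\partial M$. For $s\in[-\rho,\rho]$ let $L_s=\int_0^{2\pi}f(\theta,s)\,d\theta$ be the length of the parallel $\mathbb{S}^1\times\{s\}$. Then for all $s,q\in[-\rho,\rho]$, $$L_s e^{-2\rho(\alpha\rho+C)}\le L_q\le L_s e^{2\rho(\alpha\rho+C)}.$$
   Context: $R$ is the scalar curvature (twice the Gauss curvature) of the metric and $k_g$ the geodesic curvature of the boundary curves $\mathbb{S}^1\times\{\pm\rho\}$. *)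

From Stdlib Require Import Reals Lra.
Open Scope R_scope.

Definition continuous2 (g : R -> R -> R) : Prop :=
  forall x y eps, 0 < eps -> exists delta, 0 < delta /\
    forall x' y', Rabs (x' - x) < delta -> Rabs (y' - y) < delta ->
      Rabs (g x' y' - g x y) < eps.

Fixpoint Ck2 (k : nat) (g : R -> R -> R) : Prop :=
  match k with
  | O => continuous2 g
  | S k' => continuous2 g /\
      exists g1 g2 : R -> R -> R,
        (forall x y, derivable_pt_lim (fun t => g t y) x (g1 x y)) /\
        (forall x y, derivable_pt_lim (fun t => g x t) y (g2 x y)) /\
        Ck2 k' g1 /\ Ck2 k' g2
  end.

Definition smooth2 (g : R -> R -> R) : Prop := forall k, Ck2 k g.

(* For the metric ds^2 = dsigma^2 + f(theta,sigma)^2 dtheta^2, given the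
   sigma-partials fs = df/dsigma and fss = d^2 f/dsigma^2:
   scalar curvature R = 2K = -2 f_{sigma sigma} / f,
   geodesic curvature of the parallels sigma = const: k_g = f_sigma / f
   (up to orientation sign, irrelevant since only |k_g| is used). *)
Definition scalar_curv (f fss : R -> R -> R) (th sg : R) : R :=
  -2 * fss th sg / f th sg.

Definition geod_curv (f fs : R -> R -> R) (th sg : R) : R :=
  fs th sg / f th sg.

From Stdlib Require Import Reals Lra.
Open Scope R_scope.

(* Along a meridian theta = const, g(sigma) = f(theta, sigma) is positive and
   R >= -alpha reads g'' / g <= alpha / 2.  The logarithmic derivative
   u = g' / g (the geodesic curvature of the parallels) satisfies the Riccati
   relation u' = g'' / g - u^2 <= alpha / 2, so the bound |u| <= C at both ends
   of [-rho, rho] propagates inwards to |u| <= alpha rho + C.  Since u = (ln g)',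
   g varies by a factor at most exp (2 rho (alpha rho + C)) along the meridian,
   and integrating over theta compares the lengths of any two parallels. *)

Lemma Rabs_le_inv (x c : R) : Rabs x <= c -> - c <= x <= c.
Proof.
  intros H; split.
  - rewrite <- Rabs_Ropp in H; pose proof (Rle_abs (- x)); lra.
  - pose proof (Rle_abs x); lra.
Qed.

Lemma exp_le_exp (x y : R) : x <= y -> exp x <= exp y.
Proof. intros [Hlt | ->]; [left; exact (exp_increasing _ _ Hlt) | right; reflexivity]. Qed.

Lemma increment_le_of_derive_le (h h' : R -> R) (a b M : R) :
  (forall c, a <= c <= b -> derivable_pt_lim h c (h' c)) ->
  (forall c, a <= c <= b -> h' c <= M) ->
  forall x y, a <= x -> x <= y -> y <= b -> h y - h x <= M * (y - x).
Proof.
  intros Hd Hb x y Hx Hxy Hy.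
  destruct (Req_dec x y) as [<- | Hne]; [lra |].
  destruct (MVT_cor2 h h' x y) as [c [Hinc Hc]]; [lra | intros c Hc; apply Hd; lra |].
  rewrite Hinc; apply Rmult_le_compat_r; [lra | apply Hb; lra].
Qed.

Lemma Rabs_increment_le_of_Rabs_derive_le (h h' : R -> R) (a b M : R) :
  (forall c, a <= c <= b -> derivable_pt_lim h c (h' c)) ->
  (forall c, a <= c <= b -> Rabs (h' c) <= M) ->
  forall x y, a <= x <= b -> a <= y <= b -> Rabs (h y - h x) <= M * Rabs (y - x).
Proof.
  intros Hd Hb.
  assert (Hmono : forall x y, a <= x -> x <= y -> y <= b ->
                    Rabs (h y - h x) <= M * Rabs (y - x)).
  { intros x y Hx Hxy Hy.
    assert (Hup : h y - h x <= M * (y - x)).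
    { apply (increment_le_of_derive_le h h' a b); auto.
      intros c Hc; exact (proj2 (Rabs_le_inv _ _ (Hb c Hc))). }
    assert (Hlow : (- h)%F y - (- h)%F x <= M * (y - x)).
    { apply (increment_le_of_derive_le (- h)%F (fun c => - h' c) a b); auto.
      - intros c Hc; exact (derivable_pt_lim_opp h c (h' c) (Hd c Hc)).
      - intros c Hc; pose proof (Rabs_le_inv _ _ (Hb c Hc)); lra. }
    unfold opp_fct in Hlow.
    rewrite (Rabs_right (y - x)) by lra.
    apply Rabs_le; lra. }
  intros x y Hx Hy.
  destruct (Rle_dec x y) as [Hxy | Hyx].
  - apply Hmono; lra.
  - rewrite (Rabs_minus_sym (h y)), (Rabs_minus_sym y); apply Hmono; lra.
Qed.

Lemma RiemannInt_le_scal (f g : R -> R) (a b c : R)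
  (pf : Riemann_integrable f a b) (pg : Riemann_integrable g a b) :
  a <= b -> (forall x, a < x < b -> f x <= g x * c) ->
  RiemannInt pf <= RiemannInt pg * c.
Proof.
  intros Hab Hfg.
  pose (pgc := RiemannInt_P10 (c - 1) pg pg).
  assert (Hgc : RiemannInt pgc = RiemannInt pg * c)
    by (rewrite (RiemannInt_P12 pg pg pgc Hab); ring).
  rewrite <- Hgc; apply RiemannInt_P19; [exact Hab |].
  intros x Hx; specialize (Hfg x Hx); lra.
Qed.

Section LogDerivative.

Variables (g g' g'' : R -> R) (a b : R).
Hypothesis g_pos : forall t, a <= t <= b -> 0 < g t.
Hypothesis g_derive : forall t, derivable_pt_lim g t (g' t).
Hypothesis g'_derive : forall t, derivable_pt_lim g' t (g'' t).

Lemma derive_ln_comp t :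
  a <= t <= b -> derivable_pt_lim (fun s => ln (g s)) t (g' t / g t).
Proof.
  intros Ht.
  replace (g' t / g t) with (/ g t * g' t) by (unfold Rdiv; ring).
  exact (derivable_pt_lim_comp g ln t _ _ (g_derive t)
           (derivable_pt_lim_ln _ (g_pos t Ht))).
Qed.

Lemma derive_log_derivative t :
  a <= t <= b ->
  derivable_pt_lim (fun s => g' s / g s) t (g'' t / g t - (g' t / g t)²).
Proof.
  intros Ht.
  assert (Hg : g t <> 0) by (pose proof (g_pos t Ht); lra).
  replace (g'' t / g t - (g' t / g t)²)
    with ((g'' t * g t - g' t * g' t) / (g t)²) by (unfold Rsqr; field; exact Hg).
  exact (derivable_pt_lim_div g' g t _ _ (g'_derive t) (g_derive t) Hg).
Qed.

Variables (k C : R).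
Hypothesis k_ge0 : 0 <= k.
Hypothesis g''_div_g_le : forall t, a <= t <= b -> g'' t / g t <= k.
Hypothesis Rabs_log_derivative_a : Rabs (g' a / g a) <= C.
Hypothesis Rabs_log_derivative_b : Rabs (g' b / g b) <= C.

Lemma Rabs_log_derivative_le t :
  a <= t <= b -> Rabs (g' t / g t) <= k * (b - a) + C.
Proof.
  intros Ht.
  assert (Hu' : forall c, a <= c <= b -> g'' c / g c - (g' c / g c)² <= k)
    by (intros c Hc; pose proof (Rle_0_sqr (g' c / g c));
        pose proof (g''_div_g_le c Hc); lra).
  pose proof (increment_le_of_derive_le _ _ a b k derive_log_derivative Hu' a t
                ltac:(lra) ltac:(lra) ltac:(lra)).
  pose proof (increment_le_of_derive_le _ _ a b k derive_log_derivative Hu' t b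
                ltac:(lra) ltac:(lra) ltac:(lra)).
  pose proof (Rabs_le_inv _ _ Rabs_log_derivative_a).
  pose proof (Rabs_le_inv _ _ Rabs_log_derivative_b).
  apply Rabs_le; split; nra.
Qed.

Lemma le_mul_exp_of_log_derivative_bound s q :
  a <= s <= b -> a <= q <= b -> g q <= g s * exp ((k * (b - a) + C) * (b - a)).
Proof.
  intros Hs Hq.
  assert (HC : 0 <= C) by (pose proof (Rabs_pos (g' a / g a)); lra).
  assert (Hln := Rabs_increment_le_of_Rabs_derive_le _ _ a b _
                   derive_ln_comp Rabs_log_derivative_le s q Hs Hq).
  assert (Hqs : Rabs (q - s) <= b - a) by (apply Rabs_le; lra).
  assert (Hln_le : ln (g q) <= ln (g s) + (k * (b - a) + C) * (b - a)).
  { pose proof (Rabs_le_inv _ _ Hln).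
    pose proof (Rmult_le_compat_l (k * (b - a) + C) _ _ ltac:(nra) Hqs); lra. }
  apply exp_le_exp in Hln_le.
  rewrite exp_plus, !exp_ln in Hln_le by auto.
  exact Hln_le.
Qed.

End LogDerivative.

Theorem lemma2p2
  (rho alpha C : R) (f fs fss : R -> R -> R)
  (hrho : 0 < rho) (halpha : 0 < alpha) (hC : 0 <= C)
  (hsmooth : smooth2 f)
  (hper : forall th sg, f (th + 2 * PI) sg = f th sg)
  (hpos : forall th sg, -rho <= sg <= rho -> 0 < f th sg)
  (hfs : forall th sg, derivable_pt_lim (fun t => f th t) sg (fs th sg))
  (hfss : forall th sg, derivable_pt_lim (fun t => fs th t) sg (fss th sg))
  (hR : forall th sg, -rho <= sg <= rho -> scalar_curv f fss th sg >= - alpha)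
  (hkg : forall th, Rabs (geod_curv f fs th rho) <= C /\
                    Rabs (geod_curv f fs th (- rho)) <= C) :
  forall s q, -rho <= s <= rho -> -rho <= q <= rho ->
  forall (pr_s : Riemann_integrable (fun th => f th s) 0 (2 * PI))
         (pr_q : Riemann_integrable (fun th => f th q) 0 (2 * PI)),
    RiemannInt pr_s * exp (- (2 * rho * (alpha * rho + C))) <= RiemannInt pr_q /\
    RiemannInt pr_q <= RiemannInt pr_s * exp (2 * rho * (alpha * rho + C)).
Proof.
  intros s q Hs Hq pr_s pr_q.
  set (K := 2 * rho * (alpha * rho + C)).
  assert (Hmeridian : forall th x y, -rho <= x <= rho -> -rho <= y <= rho ->
                        f th y <= f th x * exp K).
  { intros th x y Hx Hy.
    replace K with ((alpha / 2 * (rho - - rho) + C) * (rho - - rho)) by (unfold K; field).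
    apply (le_mul_exp_of_log_derivative_bound (f th) (fs th) (fss th)); auto; try lra.
    - intros t Ht; specialize (hR th t Ht); unfold scalar_curv, Rdiv in hR |- *; lra.
    - exact (proj2 (hkg th)).
    - exact (proj1 (hkg th)). }
  assert (H2PI : 0 <= 2 * PI) by (pose proof PI_RGT_0; lra).
  split.
  - pose proof (RiemannInt_le_scal _ _ _ _ _ pr_s pr_q H2PI
                  (fun th _ => Hmeridian th q s Hq Hs)) as Hsq.
    apply (Rmult_le_compat_r (exp (- K))) in Hsq; [| left; apply exp_pos].
    rewrite Rmult_assoc, <- exp_plus, Rplus_opp_r, exp_0, Rmult_1_r in Hsq.
    exact Hsq.
  - exact (RiemannInt_le_scal _ _ _ _ _ pr_q pr_s H2PI
             (fun th _ => Hmeridian th s q Hs Hq)).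
Qed.
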